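(* In the Euclidean plane $\mathbb R^2$, let $\mu\neq 0$ and let $\gamma$ be a critical curve of $\mathbf{\Theta}_\mu$ whose first-integral constant $d$ (defined by $\mu^4\kappa_s^2=d\,e^{-2\mu\kappa}-(\mu\kappa-1)^2$) is positive. Then for every $\lambda>0$, the dilation $\widetilde\gamma(s)=\lambda\gamma(s/\lambda)$ is a critical curve of $\mathbf{\Theta}_{\lambda\mu}$ whose first-integral constant is positive (indeed equal to $d$).
   Context: A critical curve of $\mathbf{\Theta}_\mu=\int_\gamma e^{\mu\kappa}ds$ in $\mathbb R^2$ is an arc-length parametrized curve whose signed curvature satisfies $\frac{d^2}{ds^2}(e^{\mu\kappa})+(\kappa^2-\kappa/\mu)e^{\mu\kappa}=0$. *)

From Stdlib Require Import Reals.
From Coquelicot Require Import Coquelicot.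
Open Scope R_scope.

Definition smooth (f : R -> R) : Prop := forall (n : nat) (s : R), ex_derive_n f n s.

Definition arclength (x y : R -> R) : Prop :=
  forall s, (Derive x s)^2 + (Derive y s)^2 = 1.

Definition curvature (x y : R -> R) (s : R) : R :=
  Derive x s * Derive_n y 2 s - Derive y s * Derive_n x 2 s.

(* critical curve of Theta_mu = int e^{mu kappa} ds:
   smooth arc-length parametrized curve with
   (e^{mu kappa})'' + (kappa^2 - kappa/mu) e^{mu kappa} = 0 *)
Definition critical_curve (mu : R) (x y : R -> R) : Prop :=
  smooth x /\ smooth y /\ arclength x y /\
  forall s,
    Derive_n (fun t => exp (mu * curvature x y t)) 2 s
    + ((curvature x y s)^2 - curvature x y s / mu) * exp (mu * curvature x y s) = 0.

Definition first_integral_constant (mu : R) (x y : R -> R) (d : R) : Prop :=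
  forall s,
    mu^4 * (Derive (curvature x y) s)^2
    = d * exp (-2 * mu * curvature x y s) - (mu * curvature x y s - 1)^2.

Definition dilate (lam : R) (f : R -> R) : R -> R := fun s => lam * f (s / lam).

(** The dilation [s |-> lam * gamma (s / lam)] preserves arc length and divides the
    curvature by [lam], while each derivative of a function of [s / lam] picks up a
    factor [1 / lam].  So [lam mu] times the new curvature is [mu] times the old one at
    [s / lam]; the Euler-Lagrange equation gets multiplied by [1 / lam^2], and in the
    first integral the factors [lam^4] and [1 / lam^4] cancel, leaving [d] unchanged. *)

From Stdlib Require Import Reals Lra Lia.
From Coquelicot Require Import Coquelicot.
Open Scope R_scope.

Definition ex_derive_upto (n : nat) (g : R -> R) : Prop :=
  forall k t, (k <= n)%nat -> ex_derive_n g k t.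

Lemma smooth_ex_derive_upto n g : smooth g -> ex_derive_upto n g.
Proof. intros Hg k t _; apply Hg. Qed.

Lemma Derive_n_comp_div g n lam s : ex_derive_upto n g ->
  Derive_n (fun t => g (t / lam)) n s = Derive_n g n (s / lam) / lam ^ n.
Proof.
  intros Hg; unfold Rdiv.
  rewrite (Derive_n_ext _ (fun t => g (/ lam * t))) by (intros t; now rewrite Rmult_comm).
  rewrite Derive_n_comp_scal by (apply filter_forall; intros t k Hk; now apply Hg).
  rewrite pow_inv, Rmult_comm, (Rmult_comm (/ lam)); reflexivity.
Qed.

Lemma smooth_dilate lam f : smooth f -> smooth (dilate lam f).
Proof.
  intros Hf n s; unfold dilate, Rdiv.
  apply ex_derive_n_scal_l.
  apply (ex_derive_n_ext (fun t => f (/ lam * t))); [intros t; now rewrite Rmult_comm|].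
  apply ex_derive_n_comp_scal, filter_forall; intros; apply Hf.
Qed.

Lemma Derive_n_dilate lam f n s : smooth f ->
  Derive_n (dilate lam f) n s = lam * Derive_n f n (s / lam) / lam ^ n.
Proof.
  intros Hf; unfold dilate.
  rewrite Derive_n_scal_l, Derive_n_comp_div by now apply smooth_ex_derive_upto.
  unfold Rdiv; ring.
Qed.

Lemma arclength_dilate lam x y : lam <> 0 -> smooth x -> smooth y ->
  arclength x y -> arclength (dilate lam x) (dilate lam y).
Proof.
  intros Hlam Hx Hy Harc s.
  rewrite <- (Harc (s / lam)).
  change (Derive ?f) with (Derive_n f 1).
  rewrite !Derive_n_dilate by assumption.
  now field.
Qed.

Lemma curvature_dilate lam x y t : lam <> 0 -> smooth x -> smooth y ->
  curvature (dilate lam x) (dilate lam y) t = curvature x y (t / lam) / lam.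
Proof.
  intros Hlam Hx Hy; unfold curvature.
  change (Derive ?f) with (Derive_n f 1).
  rewrite !Derive_n_dilate by assumption.
  now field.
Qed.

Section CurvatureRegularity.
Variables x y : R -> R.
Hypotheses (Hx : smooth x) (Hy : smooth y).

Lemma ex_derive_curvature t : ex_derive (curvature x y) t.
Proof.
  apply (ex_derive_minus (fun s => Derive x s * Derive_n y 2 s)
                         (fun s => Derive y s * Derive_n x 2 s));
    apply ex_derive_mult;
    [apply (Hx 2%nat) | apply (Hy 3%nat) | apply (Hy 2%nat) | apply (Hx 3%nat)].
Qed.

(* The terms [x'' y''] of the product rule cancel. *)
Lemma Derive_curvature t :
  Derive (curvature x y) t = Derive x t * Derive_n y 3 t - Derive y t * Derive_n x 3 t.
Proof.
  unfold curvature.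
  rewrite (Derive_minus (fun s => Derive x s * Derive_n y 2 s)
                        (fun s => Derive y s * Derive_n x 2 s))
    by (apply ex_derive_mult;
        first [apply (Hx 2%nat) | apply (Hx 3%nat) | apply (Hy 2%nat) | apply (Hy 3%nat)]).
  rewrite !Derive_mult
    by first [apply (Hx 2%nat) | apply (Hx 3%nat) | apply (Hy 2%nat) | apply (Hy 3%nat)].
  change (Derive (Derive ?f) t) with (Derive_n f 2 t).
  change (Derive (Derive_n ?f 2) t) with (Derive_n f 3 t).
  ring.
Qed.

Lemma ex_derive_Derive_curvature t : ex_derive (Derive (curvature x y)) t.
Proof.
  apply (ex_derive_ext (fun s => Derive x s * Derive_n y 3 s - Derive y s * Derive_n x 3 s));
    [intros s; now rewrite Derive_curvature|].
  apply (ex_derive_minus (fun s => Derive x s * Derive_n y 3 s)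
                         (fun s => Derive y s * Derive_n x 3 s));
    apply ex_derive_mult;
    [apply (Hx 2%nat) | apply (Hy 4%nat) | apply (Hy 2%nat) | apply (Hx 4%nat)].
Qed.

Lemma ex_derive_upto_curvature : ex_derive_upto 1 (curvature x y).
Proof.
  intros [|[|k]] t Hk; [exact I | apply ex_derive_curvature | lia].
Qed.

Lemma ex_derive_upto_exp_curvature mu :
  ex_derive_upto 2 (fun t => exp (mu * curvature x y t)).
Proof.
  assert (HD : forall s, Derive (fun t => exp (mu * curvature x y t)) s
                         = mu * Derive (curvature x y) s * exp (mu * curvature x y s)).
  { intros s; apply is_derive_unique; auto_derive.
    - apply ex_derive_curvature.
    - now rewrite Rmult_1_l. }
  intros [|[|[|k]]] t Hk; try lia.
  - exact I.
  - simpl; auto_derive; apply ex_derive_curvature.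
  - simpl; apply (ex_derive_ext _ _ _ (fun s => eq_sym (HD s))).
    apply ex_derive_mult; [apply ex_derive_mult|].
    + apply ex_derive_const.
    + apply ex_derive_Derive_curvature.
    + auto_derive; apply ex_derive_curvature.
Qed.

End CurvatureRegularity.

Section DilatedCurve.
Variables (lam : R) (x y : R -> R).
Hypotheses (Hlam : lam <> 0) (Hx : smooth x) (Hy : smooth y).

Lemma Derive_curvature_dilate s :
  Derive (curvature (dilate lam x) (dilate lam y)) s
  = Derive (curvature x y) (s / lam) / lam ^ 2.
Proof.
  rewrite (Derive_ext _ (fun t => / lam * curvature x y (t / lam)))
    by (intros t; rewrite curvature_dilate by assumption; apply Rmult_comm).
  rewrite Derive_scal.
  change (Derive ?f s) with (Derive_n f 1 s).
  rewrite Derive_n_comp_div by now apply ex_derive_upto_curvature.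
  simpl; change (fun u => curvature x y u) with (curvature x y); now field.
Qed.

Lemma Derive2_exp_curvature_dilate mu s :
  Derive_n (fun t => exp (lam * mu * curvature (dilate lam x) (dilate lam y) t)) 2 s
  = Derive_n (fun t => exp (mu * curvature x y t)) 2 (s / lam) / lam ^ 2.
Proof.
  rewrite (Derive_n_ext _ (fun t => (fun u => exp (mu * curvature x y u)) (t / lam))).
  - apply (Derive_n_comp_div (fun u => exp (mu * curvature x y u))).
    now apply ex_derive_upto_exp_curvature.
  - intros t; rewrite curvature_dilate by assumption; f_equal; now field.
Qed.

Lemma critical_curve_dilate mu :
  critical_curve mu x y -> critical_curve (lam * mu) (dilate lam x) (dilate lam y).
Proof.
  intros (_ & _ & Harc & Heq).
  split; [now apply smooth_dilate|].
  split; [now apply smooth_dilate|].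
  split; [now apply arclength_dilate|].
  intros s.
  rewrite Derive2_exp_curvature_dilate, curvature_dilate by assumption.
  replace (lam * mu * (curvature x y (s / lam) / lam)) with (mu * curvature x y (s / lam))
    by now field.
  transitivity ((/ lam) ^ 2 * (Derive_n (fun t => exp (mu * curvature x y t)) 2 (s / lam)
                 + (curvature x y (s / lam) ^ 2 - curvature x y (s / lam) / mu)
                   * exp (mu * curvature x y (s / lam)))).
  - unfold Rdiv; rewrite Rinv_mult, <- pow_inv; ring.
  - rewrite Heq; ring.
Qed.

Lemma first_integral_constant_dilate mu d :
  first_integral_constant mu x y d ->
  first_integral_constant (lam * mu) (dilate lam x) (dilate lam y) d.
Proof.
  intros Hfi s.
  rewrite Derive_curvature_dilate, curvature_dilate by assumption.
  replace (lam * mu * (curvature x y (s / lam) / lam)) with (mu * curvature x y (s / lam))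
    by now field.
  replace (-2 * (lam * mu) * (curvature x y (s / lam) / lam))
    with (-2 * mu * curvature x y (s / lam)) by now field.
  rewrite <- Hfi; now field.
Qed.

End DilatedCurve.

Theorem proposition4p1 :
  forall (mu : R) (x y : R -> R) (d : R),
    mu <> 0 ->
    critical_curve mu x y ->
    first_integral_constant mu x y d ->
    0 < d ->
    forall lam : R, 0 < lam ->
      critical_curve (lam * mu) (dilate lam x) (dilate lam y) /\
      first_integral_constant (lam * mu) (dilate lam x) (dilate lam y) d /\
      0 < d.
Proof.
  intros mu x y d _ Hcrit Hfi Hd lam Hlam.
  assert (Hlam0 : lam <> 0) by lra.
  pose proof Hcrit as (Hx & Hy & _).
  split; [|split; [|exact Hd]].
  - now apply critical_curve_dilate.
  - now apply first_integral_constant_dilate.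
Qed.
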